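(* Let $\mathbb{F}$ be any field and let $\pi,\sigma\in S_n$ be such that their permutation matrices are similar in $GL(n,\mathbb{F})$. Then for every integer $d\ge 1$, $m_d(\pi)=m_d(\sigma)$, where $m_d(\pi)$ denotes the number of cycles of $\pi$ whose length is divisible by $d$.
   Context: The permutation matrix $[\pi]$ of $\pi\in S_n$ is defined by $[\pi]_{i,j}=1$ if $i=\pi(j)$ and $0$ otherwise. Cycles include fixed points as cycles of length 1. *)

From mathcomp Require Import all_boot all_algebra all_fingroup.
Set Implicit Arguments. Unset Strict Implicit. Unset Printing Implicit Defensive.
Import GRing.Theory.
Local Open Scope ring_scope.

Definition pmat (F : fieldType) (n : nat) (p : 'S_n) : 'M[F]_n :=
  \matrix_(i, j) (if i == p j then 1 else 0).

Definition similar_GL (F : fieldType) (n : nat) (A B : 'M[F]_n) : Prop :=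
  exists2 P : 'M[F]_n, P \in unitmx & B = P *m A *m invmx P.

(* m_d(pi): number of cycles (orbits, fixed points included) of pi whose
   length is divisible by d. *)
Definition m_cyc (n : nat) (d : nat) (p : 'S_n) : nat :=
  #|[set C in porbits p | (d %| #|C|)%N]|.

(* The fixed space of a permutation matrix [t] over any field has dimension
   the number of cycles of t, and [t]^k = [t^k]; so if [pi] and [sigma] are
   similar, pi^k and sigma^k have equally many cycles for every k.  A cycle of
   length l splits into gcd(l, k) cycles of the k-th power, and
   gcd(l, k) = sum_(e | l, e | k) phi(e), so the number of cycles of pi^k is
   sum_(e | k) phi(e) m_e(pi).  This triangular system, whose diagonal
   coefficient phi(k) is positive, determines every m_d(pi). *)
From mathcomp Require Import all_boot all_algebra all_fingroup all_solvable.
Set Implicit Arguments. Unset Strict Implicit. Unset Printing Implicit Defensive.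
Import GRing.Theory Num.Theory.

Lemma gcdn_sum_totient l k : 0 < k ->
  gcdn l k = \sum_(e < k.+1 | e %| k) totient e * (e %| l).
Proof.
move=> k_gt0; have g_gt0 : 0 < gcdn l k by rewrite gcdn_gt0 k_gt0 orbT.
rewrite -(big_mkord (fun e => e %| k) (fun e => totient e * (e %| l))).
rewrite -{1}(sum_totient_dvd (gcdn l k)) -(big_mkord (fun e => e %| _)).
rewrite (@big_nat_widen _ _ _ 0 (gcdn l k).+1 k.+1); last first.
  by rewrite ltnS dvdn_leq // dvdn_gcdr.
rewrite big_mkcond [RHS]big_mkcond; apply: eq_big_nat => e _ /=.
have [e_g | ] := boolP (e %| gcdn l k).
  rewrite ltnS dvdn_leq //.
  by move: e_g; rewrite dvdn_gcd => /andP[-> ->]; rewrite muln1.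
by rewrite dvdn_gcd; case: (e %| l) (e %| k) => [] [] //= _; rewrite muln0.
Qed.

Lemma totient_dvd_sum_inj (f g : nat -> nat) :
  (forall k, 0 < k -> \sum_(e < k.+1 | e %| k) totient e * f e =
                      \sum_(e < k.+1 | e %| k) totient e * g e) ->
  forall d, 0 < d -> f d = g d.
Proof.
move=> eq_fg d; elim: d {-2}d (leqnn d) => [|N IH] d le_dN d_gt0.
  by case: d le_dN d_gt0.
have := eq_fg d d_gt0.
rewrite (bigD1 ord_max) // [RHS](bigD1 ord_max) //=.
rewrite (eq_bigr (fun e : 'I_d.+1 => totient e * g e)) => [|e /andP[e_d e_neq]].
  by move/eqP; rewrite eqn_add2r eqn_pmul2l ?totient_gt0 // => /eqP.
have e_lt_d : e < d.
  rewrite ltn_neqAle dvdn_leq // andbT.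
  by apply: contra e_neq => /eqP e_eq; apply/eqP/val_inj.
congr (_ * _); apply: IH; first by rewrite -ltnS (leq_trans e_lt_d).
by rewrite lt0n; apply: contraTneq e_d => ->; rewrite dvd0n -lt0n d_gt0.
Qed.

Section PermCycles.
Variable T : finType.
Implicit Types (s : {perm T}) (x : T).

Lemma expg_porbit_fix s m x :
  ((s ^+ m)%g x == x) = (#|porbit s x| %| m).
Proof.
set l := #|porbit s x|.
have l_gt0 : 0 < l by rewrite lt0n card_porbit_neq0.
have s_l : (s ^+ l)%g x = x by rewrite permX iter_porbit.
have s_lq q : (s ^+ (l * q))%g x = x by rewrite expgM permX iter_fix.
rewrite {1}(divn_eq m l) expgD permM mulnC s_lq /dvdn.
have := nth_uniq x _ _ (uniq_traject_porbit s x).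
have r_lt_l : m %% l < l by rewrite ltn_mod.
rewrite size_traject => /(_ _ _ r_lt_l l_gt0).
by rewrite !nth_traject // permX => ->.
Qed.

Lemma card_porbitX s k x :
  #|porbit (s ^+ k)%g x| * gcdn #|porbit s x| k = #|porbit s x|.
Proof.
set l := #|porbit s x|; set a := #|porbit (s ^+ k)%g x|.
have l_gt0 : 0 < l by rewrite lt0n card_porbit_neq0.
have g_gt0 : 0 < gcdn l k by rewrite gcdn_gt0 l_gt0.
have dvd_a m : (a %| m) = (l %/ gcdn l k %| m).
  rewrite -expg_porbit_fix -expgM expg_porbit_fix -/l.
  rewrite -[RHS](dvdn_pmul2r g_gt0) divnK ?dvdn_gcdl //.
  have -> : (l %| k * m) = (l %| gcdn (k * m) (l * m)).
    by rewrite dvdn_gcd (dvdn_mulr _ (dvdnn l)) andbT.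
  by rewrite -muln_gcdl gcdnC mulnC.
have -> : a = l %/ gcdn l k.
  by apply/eqP; rewrite eqn_dvd dvd_a dvdnn -dvd_a dvdnn.
by rewrite divnK ?dvdn_gcdl.
Qed.

End PermCycles.

Section CountPorbits.
Variable T : finType.
Implicit Types (s : {perm T}) (x : T).
Local Open Scope ring_scope.

Lemma sum_porbits (R : numFieldType) s (f : {set T} -> R) :
  \sum_(C in porbits s) f C = \sum_x f (porbit s x) / #|porbit s x|%:R.
Proof.
rewrite (partition_big_imset (porbit s) (mem T)) /=.
apply: eq_bigr => _ /imsetP[x _ ->].
rewrite (eq_bigr (fun=> f (porbit s x) / #|porbit s x|%:R)) => [|y /eqP-> //].
rewrite sumr_const.
have -> : #|[pred y | porbit s y == porbit s x]| = #|porbit s x|.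
  by apply: eq_card => y; rewrite !inE eq_porbit_mem.
by rewrite -[_ *+ _]mulr_natr mulfVK // pnatr_eq0 card_porbit_neq0.
Qed.

Lemma card_porbitsX s k :
  #|porbits (s ^+ k)%g| = (\sum_(C in porbits s) gcdn #|C| k)%N.
Proof.
apply/eqP; rewrite -(eqr_nat rat) natr_sum -sum1_card natr_sum.
rewrite !(sum_porbits (R := rat)) /=; apply/eqP/eq_bigr => x _.
rewrite -[X in _ = _ / X%:R](card_porbitX s k x).
have a_neq0 := card_porbit_neq0 (s ^+ k)%g x.
have g_gt0 : (0 < gcdn #|porbit s x| k)%N.
  by rewrite gcdn_gt0 lt0n card_porbit_neq0.
by rewrite natrM invfM mulrCA mulfV ?mulr1 ?mul1r // pnatr_eq0 -lt0n.
Qed.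

End CountPorbits.

Lemma card_porbitsX_m_cyc n (p : 'S_n) k : 0 < k ->
  #|porbits (p ^+ k)%g| = \sum_(e < k.+1 | e %| k) totient e * m_cyc e p.
Proof.
move=> k_gt0; rewrite card_porbitsX.
under eq_bigr => C _ do rewrite (gcdn_sum_totient _ k_gt0).
rewrite exchange_big; apply: eq_bigr => e _ /=.
rewrite -big_distrr /=; congr (_ * _).
rewrite /m_cyc -sum1_card big_mkcond [RHS]big_mkcond /=.
by apply: eq_bigr => C _; rewrite !inE; case: (C \in _).
Qed.

Section PermutationMatrices.
Variable F : fieldType.
Local Open Scope ring_scope.

Lemma mulmx_pmatE m n (A : 'M[F]_(m, n)) (p : 'S_n) i x :
  (A *m pmat F p) i x = A i (p x).
Proof.
rewrite mxE (bigD1 (p x)) //= mxE eqxx mulr1 big1 ?addr0 // => y /negbTE y_px.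
by rewrite mxE y_px mulr0.
Qed.

Lemma pmatM n (p q : 'S_n) : pmat F p *m pmat F q = pmat F (q * p)%g.
Proof. by apply/matrixP => i j; rewrite mulmx_pmatE !mxE permM. Qed.

Lemma pmatX n (p : 'S_n) k : pmat F p ^+ k = pmat F (p ^+ k)%g.
Proof.
elim: k => [|k IHk].
  by apply/matrixP => i j; rewrite expr0 !mxE perm1; case: (i == j).
by rewrite exprS IHk -mulmxE pmatM expgSr.
Qed.

Lemma mxrank_conj n (P A : 'M[F]_n) : P \in unitmx ->
  \rank (P *m A *m invmx P) = \rank A.
Proof.
move=> P_unit; rewrite mxrankMfree ?row_free_unit ?unitmx_inv //.
by rewrite eqmxMfull ?row_full_unit.
Qed.

Lemma expr_conj n (P A : 'M[F]_n) k : P \in unitmx ->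
  (P *m A *m invmx P) ^+ k = P *m A ^+ k *m invmx P.
Proof.
move=> P_unit; elim: k => [|k IHk]; first by rewrite !expr0 mulmx1 mulmxV.
by rewrite !exprS IHk -!mulmxE !mulmxA mulmxKV.
Qed.

Lemma mxrank_fixed_conj n (P A : 'M[F]_n) : P \in unitmx ->
  \rank (kermx (P *m A *m invmx P - 1%:M)) = \rank (kermx (A - 1%:M)).
Proof.
move=> P_unit; rewrite !mxrank_ker -(mxrank_conj (A - 1%:M) P_unit).
by rewrite mulmxBr mulmxBl mulmx1 mulmxV.
Qed.

End PermutationMatrices.

Section CycleIndicators.
Variables (F : fieldType) (n : nat) (t : 'S_n).
Local Open Scope ring_scope.

Definition cycle_of (i : 'I_#|porbits t|) : {set 'I_n} := enum_val i.

Lemma porbit_in_porbits x : porbit t x \in porbits t.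
Proof. exact: imset_f. Qed.

Definition cycle_index x : 'I_#|porbits t| :=
  enum_rank_in (porbit_in_porbits x) (porbit t x).

Lemma cycle_of_index x : cycle_of (cycle_index x) = porbit t x.
Proof. by rewrite /cycle_of enum_rankK_in ?porbit_in_porbits. Qed.

Lemma cycle_index_perm x : cycle_index (t x) = cycle_index x.
Proof.
apply: enum_val_inj; rewrite -!/(cycle_of _) !cycle_of_index.
by have := porbit_perm t 1 x; rewrite expg1.
Qed.

Lemma cycle_ofP i : exists y, cycle_of i = porbit t y.
Proof. by have /imsetP[y _ Ci] := enum_valP i; exists y. Qed.

Lemma mem_cycle_of i x : (x \in cycle_of i) = (i == cycle_index x).
Proof.
have [y Ci] := cycle_ofP i.
rewrite Ci -eq_porbit_mem -cycle_of_index -Ci /cycle_of.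
by rewrite (inj_eq enum_val_inj) eq_sym.
Qed.

Lemma pick_cycle_of i :
  exists2 r, [pick y in cycle_of i] = Some r & r \in cycle_of i.
Proof.
case: pickP => [r r_i | none]; first by exists r.
have [y Ci] := cycle_ofP i.
by have := none y; rewrite Ci porbit_id.
Qed.

Definition cycle_mx : 'M[F]_(#|porbits t|, n) :=
  \matrix_(i, x) (x \in cycle_of i)%:R.

Definition cycle_rep_mx : 'M[F]_(n, #|porbits t|) :=
  \matrix_(x, i) (Some x == [pick y in cycle_of i])%:R.

Lemma mulmx_cycle_mx m (A : 'M[F]_(m, #|porbits t|)) a x :
  (A *m cycle_mx) a x = A a (cycle_index x).
Proof.
rewrite mxE (bigD1 (cycle_index x)) //= mxE mem_cycle_of eqxx mulr1.
by rewrite big1 ?addr0 // => i /negbTE i_x; rewrite mxE mem_cycle_of i_x mulr0.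
Qed.

Lemma mulmx_cycle_rep_mx m (A : 'M[F]_(m, n)) a i r :
  [pick y in cycle_of i] = Some r -> (A *m cycle_rep_mx) a i = A a r.
Proof.
move=> pick_r; rewrite mxE (bigD1 r) //= mxE pick_r eqxx mulr1.
rewrite big1 ?addr0 // => y /negbTE y_r.
by rewrite mxE pick_r (inj_eq Some_inj) y_r mulr0.
Qed.

Lemma cycle_mx_rep : cycle_mx *m cycle_rep_mx = 1%:M.
Proof.
apply/matrixP => i j; have [r pick_r] := pick_cycle_of j.
by rewrite (mulmx_cycle_rep_mx _ _ pick_r) !mxE !mem_cycle_of => /eqP <-.
Qed.

Lemma mxrank_cycle_mx : \rank cycle_mx = #|porbits t|.
Proof. by apply/eqP/row_freeP; exists cycle_rep_mx; apply: cycle_mx_rep. Qed.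

Lemma cycle_mx_pmat : cycle_mx *m pmat F t = cycle_mx.
Proof.
apply/matrixP => i x.
by rewrite mulmx_pmatE !mxE !mem_cycle_of cycle_index_perm.
Qed.

Lemma pmat_fixed_row (v : 'rV[F]_n) :
  v *m pmat F t = v -> v = v *m cycle_rep_mx *m cycle_mx.
Proof.
move=> v_fixed.
have v_t x : v 0 (t x) = v 0 x by rewrite -mulmx_pmatE v_fixed.
have v_orbit x y : y \in porbit t x -> v 0 y = v 0 x.
  case/porbitP => m ->; elim: m => [|m IHm]; first by rewrite expg0 perm1.
  by rewrite expgSr permM v_t.
apply/rowP => x; rewrite mulmx_cycle_mx.
have [r pick_r r_x] := pick_cycle_of (cycle_index x).
by rewrite (mulmx_cycle_rep_mx _ _ pick_r) (v_orbit x) // -cycle_of_index.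
Qed.

Lemma fixed_space_pmat : (kermx (pmat F t - 1%:M) == cycle_mx)%MS.
Proof.
apply/andP; split; last first.
  by rewrite sub_kermx mulmxBr mulmx1 cycle_mx_pmat subrr.
apply/row_subP => a; set v := row a _.
have v_fixed : v *m pmat F t = v.
  apply/eqP; rewrite -subr_eq0 -{2}[v]mulmx1 -mulmxBr.
  by rewrite -row_mul mulmx_ker row0.
by rewrite (pmat_fixed_row v_fixed); apply: submxMl.
Qed.

Lemma mxrank_fixed_pmat : \rank (kermx (pmat F t - 1%:M)) = #|porbits t|.
Proof. by rewrite (eqmx_rank fixed_space_pmat) mxrank_cycle_mx. Qed.

End CycleIndicators.

Theorem claim2p4 (F : fieldType) (n : nat) (pi sigma : 'S_n) :
  similar_GL (pmat F pi) (pmat F sigma) ->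
  forall d : nat, (0 < d)%N -> m_cyc d pi = m_cyc d sigma.
Proof.
move=> [P P_unit sigmaE].
have card_porbitsX_eq k : #|porbits (pi ^+ k)%g| = #|porbits (sigma ^+ k)%g|.
  rewrite -!(mxrank_fixed_pmat F) -!pmatX sigmaE expr_conj //.
  by rewrite (mxrank_fixed_conj (pmat F pi ^+ k) P_unit).
apply: (@totient_dvd_sum_inj (fun e => m_cyc e pi) (fun e => m_cyc e sigma)).
move=> k k_gt0.
by rewrite -!card_porbitsX_m_cyc // card_porbitsX_eq.
Qed.
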